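(* Let $r\ge1$, let $\mathbf{a}=\langle a_1,\dots,a_s\rangle$ be an integer vector with $s\le r+1$, and let $\mathbf{b}=\langle b_1\rangle$ with $b_1=a_1+\cdots+a_s$. Put $\delta=a_1\varepsilon_1+\cdots+a_s\varepsilon_s-b_1\varepsilon_{r+1}\in\mathbb{Z}^{r+1}$. Then the map sending a juggling sequence $S\in\mathrm{JS}(\mathbf{a},\mathbf{b},r)$ to the multiset of positive roots $\{\varepsilon_i-\varepsilon_{i+j}\}$, with $\varepsilon_i-\varepsilon_{i+j}$ taken with multiplicity equal to the number of throws at time $i$ to height $j$ in $S$, is a bijection from $\mathrm{JS}(\mathbf{a},\mathbf{b},r)$ onto $P_{A_r}(\delta)$.
   Context: A (magic) juggling state is a finitely supported integer vector $\mathbf{s}=\langle s_1,s_2,\dots\rangle$ indexed by heights $1,2,\dots$ (trailing zeros omitted). A juggling sequence of length $n$ from $\mathbf{a}$ to $\mathbf{b}$ is a sequence $(\mathbf{s}_0,\dots,\mathbf{s}_n)$ with $\mathbf{s}_0=\mathbf{a}$, $\mathbf{s}_n=\mathbf{b}$, such that for each $1\le i\le n$ there are nonnegative integers $c^{(i)}_1,c^{(i)}_2,\dots$ (finitely many nonzero) with $\sum_k c^{(i)}_k=(\mathbf{s}_{i-1})_1$ and $(\mathbf{s}_i)_k=(\mathbf{s}_{i-1})_{k+1}+c^{(i)}_k$ for all $k\ge1$; $c^{(i)}_j$ is the number of throws at time $i$ to height $j$. $\mathrm{JS}(\mathbf{a},\mathbf{b},n)$ denotes the set of these (no hand capacity constraint).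 For $r\ge1$, $\varepsilon_1,\dots,\varepsilon_{r+1}$ is the standard basis of $\mathbb{R}^{r+1}$ and $\Phi^+_{A_r}=\{\varepsilon_i-\varepsilon_j:1\le i<j\le r+1\}$. For $\mu\in\mathbb{Z}^{r+1}$ and $\Lambda\subseteq\Phi^+_{A_r}$, $P_\Lambda(\mu)$ is the set of finite multisets of elements of $\Lambda$ whose sum is $\mu$ (the empty multiset is a partition of $0$), $K_\Lambda(\mu)=|P_\Lambda(\mu)|$; for $\Lambda=\Phi^+_{A_r}$ we write $P_{A_r}$ and $K_{A_r}$ (Kostant's partition function). *)

From HB Require Import structures.
From mathcomp Require Import all_boot all_order all_algebra.
Set Implicit Arguments. Unset Strict Implicit. Unset Printing Implicit Defensive.
Import Order.TTheory GRing.Theory Num.Theory.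
Local Open Scope ring_scope.

(* A (magic) juggling state: [s k] is the entry at height [k.+1]
   (heights 1,2,... are stored 0-based). *)
Definition state := nat -> int.

Definition fin_supp (s : state) : Prop := exists N : nat, forall k, (N <= k)%N -> s k = 0.

Definition state_of_seq (a : seq int) : state := fun k => nth 0 a k.

(* one step s -> s' with throw vector c (c k = number of throws to height k.+1) *)
Definition throw_step (s s' : state) (c : nat -> nat) : Prop :=
  (exists N : nat, (forall k, (N <= k)%N -> c k = 0%N) /\
                   \sum_(k < N) (c k)%:Z = s 0%N) /\
  forall k, s' k = s k.+1 + (c k)%:Z.

Definition is_JS (a b : state) (n : nat) (S : seq state) : Prop :=
  size S = n.+1 /\ nth a S 0 = a /\ nth a S n = b /\
  (forall i, (i <= n)%N -> fin_supp (nth a S i)) /\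
  (forall i, (0 < i <= n)%N -> exists c, throw_step (nth a S i.-1) (nth a S i) c).

(* number of throws at time i (1-based) to height j (1-based) in S:
   c^{(i)}_j = (s_i)_j - (s_{i-1})_{j+1}  *)
Definition throws (S : seq state) (i j : nat) : nat :=
  `| nth (fun _ => 0%R : int) S i j.-1 - nth (fun _ => 0%R : int) S i.-1 j |%N.

(* positive roots of A_r: eps_i - eps_j, i < j, with 0-based ordinals of 'I_(r+1) *)
Definition posroot (r : nat) := {p : 'I_r.+1 * 'I_r.+1 | (p.1 < p.2)%N}.

Definition root_vec r (p : posroot r) : 'rV[int]_r.+1 :=
  delta_mx 0 (val p).1 - delta_mx 0 (val p).2.

Definition root_multiset r := {ffun posroot r -> nat}.

Definition kostant_parts r (mu : 'rV[int]_r.+1) : pred (root_multiset r) :=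
  fun m => \sum_(p : posroot r) root_vec p *+ m p == mu.


(* the map: eps_i - eps_{i+j} with multiplicity = throws at time i to height j.
   With 0-based ordinals p = (i-1, i+j-1): time i = p.1 + 1, height j = p.2 - p.1 *)
Definition js_to_roots r (S : seq state) : root_multiset r :=
  [ffun p : posroot r => throws S (val p).1.+1 ((val p).2 - (val p).1)].

Definition delta r (a : seq int) : 'rV[int]_r.+1 :=
  \row_(k < r.+1) (nth 0 a k - (if k == ord_max then \sum_(x <- a) x else 0)).

From HB Require Import structures.
From mathcomp Require Import all_boot all_order all_algebra zify.
From Stdlib Require Import FunctionalExtensionality.
Set Implicit Arguments. Unset Strict Implicit. Unset Printing Implicit Defensive.
Import Order.TTheory GRing.Theory Num.Theory.
Local Open Scope ring_scope.

(* Unwinding the step relation, the state at time [i] is explicit in the initial state and the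
   throws made before time [i] ([juggle_state]); in particular a juggling sequence is determined
   by its throw counts.  The coordinate of [eps_i] in the associated sum of roots is the number
   of throws at time [i] minus the number of earlier throws coming down to be rethrown at time
   [i].  The balls thrown at time [i] are exactly those at height 1 at time [i - 1]: the [a_i]
   initial ones and the ones coming down then, so this coordinate is [a_i] for [i <= r]; at time
   [r + 1] the balls coming down form the final state [<b_1>], which gives [a_(r+1) - b_1].
   Conversely, these balance equations are exactly what makes the throw counts read off a
   Kostant partition into a juggling sequence. *)

Lemma sum_ord_gt_shift (V : nmodType) n q (F : nat -> V) : (q <= n)%N ->
  \sum_(j < n.+1 | (q < j)%N) F j = \sum_(h < n - q) F (q + h.+1)%N.
Proof.
move=> qn; rewrite -big_mkord (big_cat_nat _ (n := q.+1)) //= ?ltnS //.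
rewrite big_nat_cond big1 ?add0r => [|j /andP[/andP[_]]]; last by rewrite ltnS leqNgt => /negbTE->.
rewrite -{1}(add0n q.+1) big_addn subSS big_mkord.
apply: eq_big => [h|h _]; first by rewrite addnS ltnS leq_addl.
by rewrite addnS -addSn addnC.
Qed.

Lemma sum_ord_widen0 (V : nmodType) N L (f : nat -> V) :
  (N <= L)%N -> (forall k, (N <= k)%N -> f k = 0) -> \sum_(k < N) f k = \sum_(k < L) f k.
Proof.
move=> NL f0; rewrite (big_ord_widen _ _ NL) [RHS](bigID (fun k : 'I_L => (k < N)%N)) /=.
by rewrite [X in _ = _ + X]big1 ?addr0 // => k; rewrite -leqNgt; apply: f0.
Qed.

Lemma sum_ord_vanish_eq (V : nmodType) N M (f : nat -> V) :
  (forall k, (N <= k)%N -> f k = 0) -> (forall k, (M <= k)%N -> f k = 0) ->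
  \sum_(k < N) f k = \sum_(k < M) f k.
Proof.
move=> fN fM; rewrite (sum_ord_widen0 (leq_maxl N M) fN).
by rewrite (sum_ord_widen0 (leq_maxr N M) fM).
Qed.

Lemma sum_posroot r (V : nmodType) (F : 'I_r.+1 -> 'I_r.+1 -> V) :
  \sum_(p : posroot r) F (val p).1 (val p).2 =
  \sum_(i < r.+1) \sum_(j < r.+1 | (i < j)%N) F i j.
Proof.
rewrite pair_big_dep /= (reindex_omap (val : posroot r -> _) insub); last first.
  by move=> x Px; rewrite insubT.
by apply: eq_bigl => -[x Px] /=; rewrite insubT /= Px eqxx.
Qed.

Lemma root_vec_sum_entry r (m : root_multiset r) (M : nat -> nat -> nat) (q : 'I_r.+1) :
  (forall p : posroot r, m p = M (val p).1 (val p).2) ->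
  (\sum_(p : posroot r) root_vec p *+ m p) 0 q =
  \sum_(j < r.+1 | (q < j)%N) (M q j)%:Z - \sum_(i < r.+1 | (i < q)%N) (M i q)%:Z.
Proof.
move=> mM; rewrite summxE.
under eq_bigr => p _ do rewrite mulmxnE !mxE mM mulrnBl.
rewrite sumrB (sum_posroot (fun i j => ((0 == 0) && (q == i))%:R *+ M i j)).
rewrite (sum_posroot (fun i j => ((0 == 0) && (q == j))%:R *+ M i j)) /=; congr (_ - _).
  rewrite (bigD1 q) //= [X in _ + X]big1 ?addr0 => [|i /negbTE iq].
    by apply: eq_bigr => j _; rewrite eqxx mulr1n natz.
  by apply: big1 => j _; rewrite eq_sym iq mul0rn.
rewrite (exchange_big_dep xpredT) //= (bigD1 q) //= [X in _ + X]big1 ?addr0 => [|j /negbTE jq].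
  by apply: eq_bigr => i _; rewrite eqxx mulr1n natz.
by apply: big1 => i _; rewrite eq_sym jq mul0rn.
Qed.

Lemma kostant_partsP r (m : root_multiset r) (M : nat -> nat -> nat) mu :
  (forall p : posroot r, m p = M (val p).1 (val p).2) ->
  m \in kostant_parts mu <->
  forall q : 'I_r.+1,
    \sum_(h < r - q) (M q (q + h.+1)%N)%:Z - \sum_(i < q) (M i q)%:Z = mu 0 q.
Proof.
move=> mM; have coordE q : (\sum_(p : posroot r) root_vec p *+ m p) 0 q =
    \sum_(h < r - q) (M q (q + h.+1)%N)%:Z - \sum_(i < q) (M i q)%:Z.
  rewrite (root_vec_sum_entry _ mM) (sum_ord_gt_shift (fun j => (M q j)%:Z) (ltnSE (ltn_ord q))).
  by rewrite -(big_ord_widen r.+1 (fun i => (M i q)%:Z) (ltnW (ltn_ord q))).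
rewrite unfold_in; split => [/eqP <- q | mu_q]; first by rewrite coordE.
by apply/eqP/matrixP => i q; rewrite ord1 coordE mu_q.
Qed.

Lemma delta_entry r a (q : 'I_r.+1) :
  delta r a 0 q = nth 0 a q - (if val q == r then \sum_(x <- a) x else 0).
Proof. by rewrite mxE -val_eqE. Qed.

(* [juggle_state a c i] is the state at time [i] when starting from [a] and making [c t h]
   throws to height [h] at time [t]: a ball at height [k.+1] was either there initially at
   height [k + i + 1], or was thrown at some time [t.+1 <= i] to height [k + i - t]. *)
Definition juggle_state (a : seq int) (c : nat -> nat -> nat) (i : nat) : state :=
  fun k => nth 0 a (k + i) + \sum_(t < i) (c t.+1 (k + i - t)%N)%:Z.

Lemma juggle_state0 a c : juggle_state a c 0 = state_of_seq a.
Proof. by apply: functional_extensionality => k; rewrite /juggle_state addn0 big_ord0 addr0. Qed.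

Lemma juggle_stateS a c i k :
  juggle_state a c i.+1 k = juggle_state a c i k.+1 + (c i.+1 k.+1)%:Z.
Proof.
rewrite /juggle_state big_ord_recr /= addrA !addnS -addSn; congr (_ + _ + _).
by rewrite subSn ?leq_addl // addnK.
Qed.

Lemma is_JS_throw_step (A B : state) r S i : is_JS A B r S -> (0 < i <= r)%N ->
  throw_step (nth A S i.-1) (nth A S i) (fun k => throws S i k.+1).
Proof.
case=> sizeS [_ [_ [_ stepS]]] i_r; have [c [c_fin c_step]] := stepS i i_r.
have def_c : c = fun k => throws S i k.+1.
  apply: functional_extensionality => k; rewrite /throws /= !(set_nth_default A) ?sizeS;
    try by case/andP: i_r => i0 ir; lia.
  by rewrite c_step addrC addKr.
by rewrite -def_c.
Qed.

Lemma is_JS_stateE r a B S i : is_JS (state_of_seq a) B r S -> (i <= r)%N ->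
  nth (state_of_seq a) S i = juggle_state a (throws S) i.
Proof.
move=> JS_S; elim: i => [_ | i IHi ir]; first by case: JS_S => _ [-> _]; rewrite juggle_state0.
have [_ step] := is_JS_throw_step JS_S (i := i.+1) ir.
by apply: functional_extensionality => k; rewrite step juggle_stateS /= IHi // ltnW.
Qed.

Section JugglingToKostant.

Variables (r : nat) (a : seq int).
Hypothesis size_a : (size a <= r.+1)%N.

Local Notation JS S := (is_JS (state_of_seq a) (state_of_seq [:: \sum_(x <- a) x]) r S).

(* Such a throw would still be in the air at time [r], at height [i + j - r > 1], where the
   final state [<b_1>] is empty. *)
Lemma throws_eq0_above S i j : JS S ->
  (1 <= i <= r)%N -> (0 < j)%N -> (r.+1 < i + j)%N -> throws S i j = 0%N.
Proof.
move=> JS_S /andP[i1 ir] j0 ij.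
have final : juggle_state a (throws S) r (i + j - r.+1)%N = 0.
  case: (JS_S) => _ [_ [endS _]]; rewrite -(is_JS_stateE JS_S (leqnn r)) endS.
  by rewrite /state_of_seq nth_default //=; lia.
rewrite /juggle_state nth_default ?add0r in final; last by apply: leq_trans size_a _; lia.
move: final; under eq_bigr do rewrite -natz.
rewrite -natr_sum natz => /eqP; rewrite eqz_nat sum_nat_eq0.
have i'r : (i.-1 < r)%N by lia.
move=> /forallP/(_ (Ordinal i'r)) /=; rewrite prednK //.
by rewrite (_ : i + j - r.+1 + r - i.-1 = j)%N; [move/eqP | lia].
Qed.

Lemma js_to_roots_kostant S : JS S -> js_to_roots r S \in kostant_parts (delta r a).
Proof.
move=> JS_S; have [_ [_ [endS _]]] := JS_S.
apply/(kostant_partsP (M := fun i j => throws S i.+1 (j - i))) => [p | q].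
  by rewrite ffunE.
have qr := ltnSE (ltn_ord q).
have state0 : nth (state_of_seq a) S q 0%N =
    nth 0 a q + \sum_(t < q) (throws S t.+1 (q - t))%:Z.
  by rewrite (is_JS_stateE JS_S qr).
under eq_bigr do rewrite addKn.
rewrite delta_entry; case: eqP => [q_r | /eqP q_r].
  move: state0; rewrite q_r endS subnn big_ord0 add0r => /= ->.
  by rewrite opprD addNKr.
have q_lt_r : (q < r)%N by rewrite ltn_neqAle q_r qr.
have [[N [throws_fin throws_sum]] _] := is_JS_throw_step JS_S (i := q.+1) q_lt_r.
rewrite (@sum_ord_vanish_eq _ (r - q) N (fun h => (throws S q.+1 h.+1)%:Z)); first last.
- by move=> k /throws_fin ->.
- by move=> k qk; rewrite throws_eq0_above //; lia.
by rewrite throws_sum state0 addrK subr0.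
Qed.

Lemma js_to_roots_inj S S' : JS S -> JS S' -> js_to_roots r S = js_to_roots r S' -> S = S'.
Proof.
move=> JS_S JS_S' roots_eq.
have throws_eq t h : (0 < t <= r)%N -> (0 < h)%N -> throws S t h = throws S' t h.
  move=> /andP[t0 tr] h0; have [th | th] := leqP (t + h) r.+1; last first.
    by rewrite !throws_eq0_above ?t0.
  have t'r : (t.-1 < r.+1)%N by lia.
  have t'hr : (t.-1 + h < r.+1)%N by lia.
  have lt_th : ((Ordinal t'r : 'I_r.+1) < Ordinal t'hr)%N by rewrite /= -addn1 leq_add2l.
  have := congr1 (fun m : root_multiset r => m (exist _ (_, _) lt_th)) roots_eq.
  by rewrite !ffunE /= addKn prednK.
have [sizeS _] := JS_S; have [sizeS' _] := JS_S'.
apply: (@eq_from_nth _ (state_of_seq a)) => [|i]; first by rewrite sizeS sizeS'.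
rewrite sizeS ltnS => ir; rewrite (is_JS_stateE JS_S ir) (is_JS_stateE JS_S' ir).
apply: functional_extensionality => k; rewrite /juggle_state; congr (_ + _).
by apply: eq_bigr => t _; have ti := ltn_ord t; rewrite throws_eq //=; lia.
Qed.

End JugglingToKostant.

Section KostantToJuggling.

Variables (r : nat) (a : seq int) (m : root_multiset r).
Hypothesis size_a : (size a <= r.+1)%N.
Hypothesis m_kostant : m \in kostant_parts (delta r a).

Definition root_mult (i j : nat) : nat :=
  if insub (inord i, inord j) : option (posroot r) is Some p then m p else 0%N.

Lemma root_multE (p : posroot r) : root_mult (val p).1 (val p).2 = m p.
Proof.
case: p => [[i j] lt_ij]; rewrite /root_mult /= !inord_val insubT /=.
by congr (m _); apply: val_inj.
Qed.

(* [inord j] is [0] when [r < j], and no positive root ends at [0]. *)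
Lemma root_mult_out i j : (r < j)%N -> root_mult i j = 0%N.
Proof.
move=> rj; rewrite /root_mult.
have -> : inord j = ord0 :> 'I_r.+1 by rewrite /inord /insubd insubF // ltnNge rj.
by rewrite insubF.
Qed.

Lemma root_mult_balance q : (q <= r)%N ->
  \sum_(h < r - q) (root_mult q (q + h.+1))%:Z - \sum_(i < q) (root_mult i q)%:Z =
  nth 0 a q - (if q == r then \sum_(x <- a) x else 0).
Proof.
move=> qr; have /(kostant_partsP (M := root_mult)) balance := m_kostant.
have := balance (fun p => esym (root_multE p)) (Ordinal (qr : q < r.+1)%N).
by rewrite delta_entry /=.
Qed.

(* Inverse of the indexing of [js_to_roots]: time [t] and height [h] give the root
   [eps_t - eps_(t+h)], the 0-based pair [(t - 1, t - 1 + h)]. *)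
Definition kostant_throws (t h : nat) : nat := root_mult t.-1 (t.-1 + h).

Definition kostant_js : seq state := mkseq (juggle_state a kostant_throws) r.+1.

Lemma nth_kostant_js x0 i : (i <= r)%N -> nth x0 kostant_js i = juggle_state a kostant_throws i.
Proof. by move=> ir; rewrite nth_mkseq. Qed.

Lemma throws_kostant_js t h : (t < r)%N -> (0 < h)%N ->
  throws kostant_js t.+1 h = kostant_throws t.+1 h.
Proof.
move=> tr h0; rewrite /throws succnK !nth_kostant_js ?(ltnW tr) //.
by rewrite -{1}(prednK h0) juggle_stateS (prednK h0) addrC addKr.
Qed.

Lemma kostant_throws_sub t q : (t <= q)%N -> kostant_throws t.+1 (q - t) = root_mult t q.
Proof. by move=> tq; rewrite /kostant_throws /= subnKC. Qed.

Lemma juggle_state_kostant i k :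
  juggle_state a kostant_throws i k = nth 0 a (k + i) + \sum_(t < i) (root_mult t (k + i))%:Z.
Proof.
congr (_ + _); apply: eq_bigr => t _.
by rewrite kostant_throws_sub // (leq_trans (ltnW (ltn_ord t))) ?leq_addl.
Qed.

Lemma juggle_state_kostant_fin_supp i : fin_supp (juggle_state a kostant_throws i).
Proof.
exists (size a + r)%N => k k_big; rewrite juggle_state_kostant nth_default; last first.
  exact: leq_trans (leq_addr r _) (leq_trans k_big (leq_addr i k)).
by rewrite add0r big1 // => t _; have ti := ltn_ord t; rewrite root_mult_out //; lia.
Qed.

Lemma juggle_state_kostant_final :
  juggle_state a kostant_throws r = state_of_seq [:: \sum_(x <- a) x].
Proof.
apply: functional_extensionality => -[|k]; rewrite juggle_state_kostant.
  move: (root_mult_balance (leqnn r)); rewrite subnn big_ord0 eqxx add0r add0n.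
  by move/eqP; rewrite eqr_oppLR opprB => /eqP ->; rewrite addrC subrK.
rewrite nth_default; last by apply: leq_trans size_a _; rewrite addSn ltnS leq_addl.
rewrite add0r big1 /state_of_seq /= ?nth_nil // => t _.
by rewrite root_mult_out // addSn ltnS leq_addl.
Qed.

(* The throws at time [i + 1] empty exactly the lowest slot of the state at time [i]:
   this is the balance condition of [m] at [eps_(i+1)]. *)
Lemma kostant_js_throw_step x0 i : (i < r)%N ->
  throw_step (nth x0 kostant_js i) (nth x0 kostant_js i.+1) (fun k => kostant_throws i.+1 k.+1).
Proof.
move=> ir; rewrite (nth_kostant_js _ (ltnW ir)) (nth_kostant_js _ ir).
split => [|k]; last exact: juggle_stateS.
exists (r - i)%N; split => [k k_big | ].
  by rewrite /kostant_throws root_mult_out //; lia.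
rewrite juggle_state_kostant add0n; apply/eqP; rewrite -subr_eq.
by move: (root_mult_balance (ltnW ir)); rewrite (ltn_eqF ir) subr0 => <-.
Qed.

Lemma kostant_js_JS :
  is_JS (state_of_seq a) (state_of_seq [:: \sum_(x <- a) x]) r kostant_js.
Proof.
split; first exact: size_mkseq.
split; first by rewrite nth_kostant_js // juggle_state0.
split; first by rewrite nth_kostant_js // juggle_state_kostant_final.
split=> [i ir | [//|i] /= ir]; first by rewrite nth_kostant_js //; apply: juggle_state_kostant_fin_supp.
by eexists; apply: kostant_js_throw_step.
Qed.

Lemma js_to_roots_kostant_js : js_to_roots r kostant_js = m.
Proof.
apply/ffunP => -[[i j] lt_ij]; rewrite ffunE /= throws_kostant_js ?subn_gt0 //.
  by rewrite kostant_throws_sub ?(ltnW lt_ij) // (root_multE (exist _ (i, j) lt_ij)).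
exact: leq_trans lt_ij (ltnSE (ltn_ord j)).
Qed.

End KostantToJuggling.

Unset Implicit Arguments.

Theorem mainTheorem3 (r : nat) (a : seq int) :
  (1 <= r)%N -> (size a <= r.+1)%N ->
  let A := state_of_seq a in
  let B := state_of_seq [:: \sum_(x <- a) x] in
  (forall S, is_JS A B r S ->
     forall i j, (1 <= i <= r)%N -> (0 < j)%N -> (r.+1 < i + j)%N -> throws S i j = 0%N) /\
  (forall S, is_JS A B r S -> js_to_roots r S \in kostant_parts (delta r a)) /\
  (forall S S', is_JS A B r S -> is_JS A B r S' ->
     js_to_roots r S = js_to_roots r S' -> S = S') /\
  (forall m, m \in kostant_parts (delta r a) ->
     exists S, is_JS A B r S /\ js_to_roots r S = m).
Proof.
move=> _ size_a A B; rewrite {}/A {}/B; split; [|split; [|split]].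
- by move=> S JS_S i j; apply: (throws_eq0_above size_a JS_S).
- exact: js_to_roots_kostant size_a.
- exact: js_to_roots_inj size_a.
- move=> m m_kostant; exists (kostant_js a m).
  by split; [apply: kostant_js_JS size_a m_kostant | apply: js_to_roots_kostant_js].
Qed.
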